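(* Assume (A2). Let $\{\alpha_k\},\{\beta_k\}$ be nonnegative, nonincreasing step sizes and $\mathcal K^*$ as in the context. Then for all $k\ge\mathcal K^*$, writing $\tau=\tau(\alpha_k)$ and $a=\alpha_{k;\tau(\alpha_k)}$, $$\|\hat Z_k-\hat Z_{k-\tau}\|\le\frac{(8\lambda_1+1)^2}{8\lambda_1^2}a\|\hat Z_{k-\tau}\|+\frac{(8\lambda_1+1)^2(2B+\|Y^*\|)}{8\lambda_1^3}a,$$ $$\|\hat Z_k-\hat Z_{k-\tau}\|\le\frac{3(8\lambda_1+1)^2}{8\lambda_1^2}a\|\hat Z_k\|+\frac{3(8\lambda_1+1)^2(2B+\|Y^*\|)}{8\lambda_1^3}a,$$ $$\|\hat Z_k-\hat Z_{k-\tau}\|^2\le\frac{9(8\lambda_1+1)^4}{32\lambda_1^4}a^2\|\hat Z_k\|^2+\frac{9(8\lambda_1+1)^4(2B+\|Y^*\|)^2}{32\lambda_1^6}a^2.$$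
   Context: Let $n\ge1$; $\|\cdot\|$ is the Euclidean norm / spectral norm. Let $\{\xi_k\}_{k\ge0}$ be a Markov chain with state space $\mathcal S$, and for $i,j\in\{1,2\}$ let $A_{ij}(\xi)\in\mathbb R^{n\times n}$, $b_i(\xi)\in\mathbb R^n$. The linear two-time-scale stochastic approximation, from arbitrary $X_0,Y_0$, is $X_{k+1}=X_k-\alpha_k(A_{11}(\xi_k)X_k+A_{12}(\xi_k)Y_k-b_1(\xi_k))$, $Y_{k+1}=Y_k-\beta_k(A_{21}(\xi_k)X_k+A_{22}(\xi_k)Y_k-b_2(\xi_k))$. Standing setting: the limits $\bar A_{ij}=\lim_k\mathbb E[A_{ij}(\xi_k)]$, $\bar b_i=\lim_k\mathbb E[b_i(\xi_k)]$ exist; $x^T\bar A_{11}x>0$ and $x^T\Delta x>0$ for $x\neq0$, where $\Delta=\bar A_{22}-\bar A_{21}\bar A_{11}^{-1}\bar A_{12}$; for $\alpha>0$, $\tau(\alpha)$ is a mixing time: $\|\mathbb E[A_{ij}(\xi_k)\mid\xi_0=\xi]-\bar A_{ij}\|\le\alpha$, $\|\mathbb E[b_i(\xi_k)\mid\xi_0=\xi]-\bar b_i\|\le\alpha$ for all $i,j,\xi$ and $k\ge\tau(\alpha)$, with $\tau(\alpha)=C\log(1/\alpha)$. (A2): there is $B>0$ with $\|b_i(\xi)\|\le B$ and $\|A_{ij}(\xi)\|\le1/4$ for all $i,j,\xi$. Notation: $(X^*,Y^* )$ solves $\bar A_{11}X^*+\bar A_{12}Y^*=\bar b_1$, $\bar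 A_{21}X^*+\bar A_{22}Y^*=\bar b_2$; $\hat X_k=X_k-\bar A_{11}^{-1}(\bar b_1-\bar A_{12}Y_k)$, $\hat Y_k=Y_k-Y^*$, $\hat Z_k=[\hat X_k^T,\hat Y_k^T]^T$; $\lambda_1$ is the smallest singular value of $\bar A_{11}$; $\alpha_{k;\tau(\alpha_k)}=\sum_{t=k-\tau(\alpha_k)}^{k-1}\alpha_t$. $\mathcal K^*$ is a positive integer with $\sum_{t=k-\tau(\alpha_k)}^{k}\alpha_t\le\tau(\alpha_k)\alpha_{k-\tau(\alpha_k)}\le\log2$ for all $k\ge\mathcal K^*$. *)

From HB Require Import structures.
From mathcomp Require Import all_boot all_order all_algebra.
From mathcomp Require Import all_classical all_reals all_analysis.
Set Implicit Arguments. Unset Strict Implicit. Unset Printing Implicit Defensive.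
Import Order.TTheory GRing.Theory Num.Theory.
Local Open Scope ring_scope.
Local Open Scope classical_set_scope.

Definition vnorm (R : realType) (m : nat) (v : 'cV[R]_m) : R :=
  Num.sqrt (\sum_(i < m) v i ord0 ^+ 2).

Definition mxnorm (R : realType) (n : nat) (M : 'M[R]_n) : R :=
  sup [set vnorm (M *m x) | x in [set x : 'cV[R]_n | vnorm x <= 1]].

Definition smin (R : realType) (n : nat) (M : 'M[R]_n) : R :=
  inf [set vnorm (M *m x) | x in [set x : 'cV[R]_n | vnorm x = 1]].

Definition posdef (R : realType) (n : nat) (M : 'M[R]_n) : Prop :=
  forall x : 'cV[R]_n, x != 0 -> 0 < (x^T *m M *m x) 0 0.

Definition alpha_win (R : realType) (alpha : nat -> R) (k tau : nat) : R :=
  \sum_(k - tau <= t < k) alpha t.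

From HB Require Import structures.
From mathcomp Require Import all_boot all_order all_algebra.
From mathcomp Require Import all_classical all_reals all_analysis.
From mathcomp Require Import ring lra.
Import Order.TTheory GRing.Theory Num.Theory.
Local Open Scope ring_scope.
Local Open Scope classical_set_scope.
Set Implicit Arguments. Unset Strict Implicit.

(* Fix a sample path and put W_t = |X_t| + |Y_t| + 4B.  By (A2) and beta_t <= alpha_t one
   step moves X and Y by at most alpha_t W_t / 4, so W changes by a factor 1 +- alpha_t / 2.
   Over the window [k - tau, k], whose step sizes sum to a <= ln 2 < 1 by the choice of K*,
   W therefore stays within a factor 2 of its value at either end, and X, Y move by at most
   a W_(k-tau) / 2.  The averaged matrices inherit the bounds of (A2) in the limit, whence
   lambda_1 <= 1/4, |Abar_11^-1| <= 1/lambda_1 and W_t <= (8 + 1/lambda_1)/2 (|Zhat_t| + K/lambda_1);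
   the three estimates follow by arithmetic in u = 1/lambda_1. *)

Section EuclideanNorm.
Variable R : realType.
Implicit Types (m : nat).

Lemma sum_CauchySchwarz m (f g : 'I_m -> R) :
  (\sum_i f i * g i) ^+ 2 <= (\sum_i f i ^+ 2) * (\sum_i g i ^+ 2).
Proof.
set P := \sum_i f i ^+ 2; set Q := \sum_i g i ^+ 2; set D := \sum_i f i * g i.
have Q_ge0 : 0 <= Q by apply: sumr_ge0 => i _; exact: sqr_ge0.
(* Expand [0 <= \sum_i (Q f_i - D g_i)^2]. *)
have : 0 <= Q * (P * Q - D ^+ 2).
  have <- : \sum_i (f i * Q - g i * D) ^+ 2 = Q * (P * Q - D ^+ 2).
    rewrite (eq_bigr (fun i => Q ^+ 2 * f i ^+ 2 + (- 2 * Q * D) * (f i * g i)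
                               + D ^+ 2 * g i ^+ 2)); last by move=> i _; ring.
    by rewrite !big_split /= -!mulr_sumr -/P -/Q -/D; ring.
  by apply: sumr_ge0 => i _; exact: sqr_ge0.
have [Q_gt0|] := ltrP 0 Q; first by rewrite pmulr_rge0 // subr_ge0.
move=> Q_le0; have Q0 : Q = 0 by apply/eqP; rewrite eq_le Q_le0 Q_ge0.
have g0 i : g i = 0.
  by apply/eqP; rewrite -sqrf_eq0; apply/eqP/(psumr_eq0P _ Q0) => // j _; exact: sqr_ge0.
by rewrite /D big1 ?expr0n ?Q0 ?mulr0 // => i _; rewrite g0 mulr0.
Qed.

Definition vdot m (u v : 'cV[R]_m) := \sum_i u i ord0 * v i ord0.

Lemma vnorm_ge0 m (v : 'cV[R]_m) : 0 <= vnorm v.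
Proof. exact: sqrtr_ge0. Qed.

Lemma sqr_vnorm m (v : 'cV[R]_m) : vnorm v ^+ 2 = \sum_i v i ord0 ^+ 2.
Proof. by rewrite sqr_sqrtr //; apply: sumr_ge0 => i _; exact: sqr_ge0. Qed.

Lemma vdotvv m (v : 'cV[R]_m) : vdot v v = vnorm v ^+ 2.
Proof. by rewrite sqr_vnorm; apply: eq_bigr => i _; rewrite expr2. Qed.

Lemma vdot_le m (u v : 'cV[R]_m) : vdot u v <= vnorm u * vnorm v.
Proof.
have [le0|gt0] := lerP (vdot u v) 0; first by rewrite (le_trans le0) ?mulr_ge0 ?vnorm_ge0.
rewrite -ler_sqr ?nnegrE ?mulr_ge0 ?vnorm_ge0 ?(ltW gt0) // exprMn !sqr_vnorm.
exact: sum_CauchySchwarz.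
Qed.

Lemma vnorm_le_of_vdot m (v : 'cV[R]_m) b : 0 <= b -> vdot v v <= vnorm v * b -> vnorm v <= b.
Proof.
move=> b_ge0; rewrite vdotvv expr2; have [->|v_neq0] := eqVneq (vnorm v) 0 => // vvb.
by rewrite -(ler_pM2l (_ : 0 < vnorm v)) // lt_def v_neq0 vnorm_ge0.
Qed.

Lemma vnorm0 m : vnorm (0 : 'cV[R]_m) = 0.
Proof. by rewrite /vnorm big1 ?sqrtr0 // => i _; rewrite mxE expr0n. Qed.

Lemma vnormD m (u v : 'cV[R]_m) : vnorm (u + v) <= vnorm u + vnorm v.
Proof.
rewrite -ler_sqr ?nnegrE ?addr_ge0 ?vnorm_ge0 // sqrrD sqr_vnorm.
under eq_bigr do rewrite !mxE sqrrD.
rewrite !big_split /= -!sqr_vnorm.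
by rewrite lerD2r lerD2l mulr2n lerD ?vdot_le.
Qed.

Lemma vnormZ m a (v : 'cV[R]_m) : vnorm (a *: v) = `|a| * vnorm v.
Proof.
rewrite /vnorm -sqrtr_sqr -sqrtrM ?sqr_ge0 // mulr_sumr.
by congr Num.sqrt; apply: eq_bigr => i _; rewrite mxE exprMn.
Qed.

Lemma vnormN m (v : 'cV[R]_m) : vnorm (- v) = vnorm v.
Proof. by rewrite -scaleN1r vnormZ normrN1 mul1r. Qed.

Lemma vnormB m (u v : 'cV[R]_m) : vnorm (u - v) <= vnorm u + vnorm v.
Proof. by rewrite -(vnormN v) vnormD. Qed.

Lemma vnormBC m (u v : 'cV[R]_m) : vnorm (u - v) = vnorm (v - u).
Proof. by rewrite -vnormN opprB. Qed.

Lemma vnormB_dist m (u v : 'cV[R]_m) : vnorm u - vnorm v <= vnorm (u - v).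
Proof. by rewrite lerBlDr -{1}(subrK v u) vnormD. Qed.

Lemma vnorm_telescope m (x : nat -> 'cV[R]_m) i j : (i <= j)%N ->
  vnorm (x j - x i) <= \sum_(i <= s < j) vnorm (x s.+1 - x s).
Proof.
elim: j => [|j IHj]; first by rewrite leqn0 => /eqP ->; rewrite subrr vnorm0 big_geq.
rewrite leq_eqVlt => /predU1P [-> | ij]; first by rewrite subrr vnorm0 big_geq.
have -> : x j.+1 - x i = (x j - x i) + (x j.+1 - x j) by rewrite [RHS]addrC addrA subrK.
by rewrite big_nat_recr //= (le_trans (vnormD _ _)) ?lerD2r ?IHj.
Qed.

Lemma sqr_vnorm_col m (u v : 'cV[R]_m) :
  vnorm (col_mx u v) ^+ 2 = vnorm u ^+ 2 + vnorm v ^+ 2.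
Proof.
by rewrite !sqr_vnorm big_split_ord; congr (_ + _); apply: eq_bigr => i _;
  rewrite ?col_mxEu ?col_mxEd.
Qed.

Lemma vnorm_col_le m (u v : 'cV[R]_m) : vnorm (col_mx u v) <= vnorm u + vnorm v.
Proof.
rewrite -ler_sqr ?nnegrE ?addr_ge0 ?vnorm_ge0 // sqr_vnorm_col sqrrD.
by rewrite lerD2r lerDl mulrn_wge0 ?mulr_ge0 ?vnorm_ge0.
Qed.

Lemma vnorm_colu_le m (u v : 'cV[R]_m) : vnorm u <= vnorm (col_mx u v).
Proof.
by rewrite -ler_sqr ?nnegrE ?vnorm_ge0 // sqr_vnorm_col lerDl sqr_ge0.
Qed.

Lemma vnorm_cold_le m (u v : 'cV[R]_m) : vnorm v <= vnorm (col_mx u v).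
Proof.
by rewrite -ler_sqr ?nnegrE ?vnorm_ge0 // sqr_vnorm_col lerDr sqr_ge0.
Qed.

Lemma vnorm_delta m (i : 'I_m) : vnorm (delta_mx i ord0 : 'cV[R]_m) = 1.
Proof.
rewrite /vnorm (bigD1 i) //= big1 ?addr0 ?mxE ?eqxx ?expr1n ?sqrtr1 //.
by move=> j /negbTE ji; rewrite mxE ji expr0n.
Qed.

Lemma normr_vcoord_le m (v : 'cV[R]_m) i : `|v i ord0| <= vnorm v.
Proof.
rewrite -sqrtr_sqr ler_sqrt ?sqr_vnorm //; last by rewrite -sqr_vnorm sqr_ge0.
by rewrite (bigD1 i) //= lerDl; apply: sumr_ge0 => j _; exact: sqr_ge0.
Qed.

End EuclideanNorm.

Section MatrixNorms.
Variable R : realType.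
Implicit Types (m : nat).

Definition frobnorm m (A : 'M[R]_m) := Num.sqrt (\sum_i \sum_j A i j ^+ 2).

Lemma frobnorm_ge0 m (A : 'M[R]_m) : 0 <= frobnorm A.
Proof. exact: sqrtr_ge0. Qed.

Lemma vnorm_mulmx_frob m (A : 'M[R]_m) x : vnorm (A *m x) <= frobnorm A * vnorm x.
Proof.
have sumsqr_ge0 (f : 'I_m -> R) : 0 <= \sum_i f i ^+ 2.
  by apply: sumr_ge0 => i _; exact: sqr_ge0.
have frob2_ge0 : 0 <= \sum_i \sum_j A i j ^+ 2 by apply: sumr_ge0 => i _.
rewrite /frobnorm /vnorm -sqrtrM // ler_sqrt ?mulr_ge0 // mulr_suml.
by apply: ler_sum => i _; rewrite mxE; exact: sum_CauchySchwarz.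
Qed.

Lemma vnorm_scale_unit m (x : 'cV[R]_m) : vnorm x != 0 -> vnorm ((vnorm x)^-1 *: x) = 1.
Proof. by move=> x0; rewrite vnormZ ger0_norm ?invr_ge0 ?vnorm_ge0 // mulVf. Qed.

Lemma vnorm_mulmx_le m (A : 'M[R]_m) x : vnorm (A *m x) <= mxnorm A * vnorm x.
Proof.
have [x0|x0] := eqVneq (vnorm x) 0.
  by have := vnorm_mulmx_frob A x; rewrite x0 !mulr0.
have x_gt0 : 0 < vnorm x by rewrite lt_def x0 vnorm_ge0.
have ub : has_ubound [set vnorm (A *m y) | y in [set y | vnorm y <= 1]].
  exists (frobnorm A) => _ [y /= y1 <-]; apply: le_trans (vnorm_mulmx_frob A y) _.
  by rewrite ler_piMr ?frobnorm_ge0.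
have : vnorm (A *m ((vnorm x)^-1 *: x)) <= mxnorm A.
  by apply: (ub_le_sup ub); exists ((vnorm x)^-1 *: x); rewrite //= vnorm_scale_unit.
rewrite -scalemxAr vnormZ ger0_norm ?invr_ge0 ?vnorm_ge0 //.
by rewrite mulrC ler_pdivrMr.
Qed.

Lemma smin_mulmx_le m (A : 'M[R]_m) x : smin A * vnorm x <= vnorm (A *m x).
Proof.
have [x0|x0] := eqVneq (vnorm x) 0; first by rewrite x0 mulr0 vnorm_ge0.
have x_gt0 : 0 < vnorm x by rewrite lt_def x0 vnorm_ge0.
have lb : has_lbound [set vnorm (A *m y) | y in [set y | vnorm y = 1]].
  by exists 0 => _ [y _ <-]; exact: vnorm_ge0.
have : smin A <= vnorm (A *m ((vnorm x)^-1 *: x)).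
  by apply: (ge_inf lb); exists ((vnorm x)^-1 *: x); rewrite //= vnorm_scale_unit.
by rewrite -scalemxAr vnormZ ger0_norm ?invr_ge0 ?vnorm_ge0 // mulrC ler_pdivlMr.
Qed.

Lemma normr_entry_le_mxnorm m (A : 'M[R]_m) i j : `|A i j| <= mxnorm A.
Proof.
have := normr_vcoord_le (A *m delta_mx j ord0) i.
rewrite -colE mxE => /le_trans; apply.
by have := vnorm_mulmx_le A (delta_mx j ord0); rewrite vnorm_delta mulr1 -colE.
Qed.

Lemma vnorm_affine_le m (A1 A2 : 'M[R]_m) x y b :
  vnorm (A1 *m x + A2 *m y - b) <= mxnorm A1 * vnorm x + mxnorm A2 * vnorm y + vnorm b.
Proof.
apply: le_trans (vnormB _ _) _; rewrite lerD2r.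
by apply: le_trans (vnormD _ _) _; rewrite lerD ?vnorm_mulmx_le.
Qed.

Lemma vdot_mulmx m (v y : 'cV[R]_m) (M : 'M[R]_m) :
  vdot v (M *m y) = \sum_(pq : 'I_m * 'I_m) (v pq.1 ord0 * y pq.2 ord0) * M pq.1 pq.2.
Proof.
rewrite /vdot -(pair_big xpredT xpredT (fun p q => v p ord0 * y q ord0 * M p q)) /=.
by apply: eq_bigr => p _; rewrite mxE mulr_sumr; apply: eq_bigr => q _; ring.
Qed.

Lemma posdef_unitmx m (A : 'M[R]_m) : posdef A -> A \in unitmx.
Proof.
move=> Apd; rewrite unitmxE unitfE; apply/negP => /det0P [v v0 vA].
have : v^T != 0 by apply: contra v0 => /eqP vT0; rewrite -(trmxK v) vT0 trmx0.
by move/Apd; rewrite trmxK vA mul0mx mxE ltxx.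
Qed.

Lemma smin_gt0 m (A : 'M[R]_m) (i0 : 'I_m) : A \in unitmx -> 0 < smin A.
Proof.
move=> Aunit.
have inv_bound (x : 'cV[R]_m) : vnorm x = 1 -> 1 <= frobnorm (invmx A) * vnorm (A *m x).
  by move=> x1; rewrite -x1 -{1}(mulKmx Aunit x); exact: vnorm_mulmx_frob.
have frob_gt0 : 0 < frobnorm (invmx A).
  rewrite lt_def frobnorm_ge0 andbT; apply/eqP => frob0.
  by have := inv_bound _ (vnorm_delta _ i0); rewrite frob0 mul0r ler10.
apply: (@lt_le_trans _ _ (frobnorm (invmx A))^-1); first by rewrite invr_gt0.
apply: lb_le_inf.
  by exists (vnorm (A *m delta_mx i0 ord0)), (delta_mx i0 ord0) => //; exact: vnorm_delta.
by move=> _ [x /= x1 <-]; rewrite -[_^-1]mulr1 ler_pdivrMl // inv_bound.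
Qed.

Lemma smin_le m (A : 'M[R]_m) (i0 : 'I_m) r :
  (forall x, vnorm (A *m x) <= r * vnorm x) -> smin A <= r.
Proof.
move=> Ar; have := smin_mulmx_le A (delta_mx i0 ord0).
by rewrite vnorm_delta mulr1 => /le_trans; apply; rewrite -[r]mulr1 -(vnorm_delta _ i0).
Qed.

Lemma vnorm_invmx_le m (A : 'M[R]_m) y : A \in unitmx -> 0 < smin A ->
  vnorm (invmx A *m y) <= (smin A)^-1 * vnorm y.
Proof.
move=> Aunit smin_gt0; rewrite ler_pdivlMl //.
by have := smin_mulmx_le A (invmx A *m y); rewrite mulmxA mulmxV // mul1mx.
Qed.

End MatrixNorms.

Section LimitsOfExpectations.
Context (R : realType) (d : measure_display) (T : measurableType d) (P : probability T R).

Lemma bounded_Lfun1 (f : T -> R) (D : R) :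
  measurable_fun setT f -> (forall w, `|f w| <= D) -> f \in Lfun P 1.
Proof.
move=> mf fD; apply/Lfun1_integrable/measurable_bounded_integrable => //.
  exact: le_lt_trans (probability_le1 P measurableT) (ltry 1).
by exists D; split; [exact: num_real | move=> M DM w _; exact: le_trans (fD w) (ltW DM)].
Qed.

Lemma expectation_comb_le (I : finType) (g : I -> T -> R) (c : I -> R) (C : R) :
  (forall i, g i \in Lfun P 1) -> (forall w, \sum_i c i * g i w <= C) ->
  \sum_i c i * fine ('E_P[g i])%E <= C.
Proof.
move=> gL gC; pose F := [seq c i \o* g i | i <- index_enum I].
have FL h : h \in F -> h \in Lfun P 1.
  by case/mapP => i _ ->; exact: Lfun_scale.
have combE : (fun w => \sum_i c i * g i w) = \sum_(h <- F) h.
  apply/funext => w; rewrite big_map fct_sumE; apply: eq_bigr => i _.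
  by rewrite /= mulrC.
have comb_L : (fun w => \sum_i c i * g i w) \in Lfun P 1.
  by rewrite combE big_seq; apply: rpred_sum => h /FL.
have EcombE : ('E_P[(fun w => \sum_i c i * g i w)%R] =
                (\sum_i c i * fine ('E_P[g i])%E)%R%:E)%E.
  rewrite combE expectation_sum // big_map -sumEFin; apply: eq_bigr => i _.
  by rewrite expectationZl ?gL // EFinM fineK ?expectation_fin_num.
have : (0 <= 'E_P[cst C \- (fun w => \sum_i c i * g i w)%R])%E.
  by apply: expectation_ge0 => w /=; rewrite subr_ge0.
by rewrite expectationB ?Lfun_cst // expectation_cst EcombE -EFinB lee_fin subr_ge0.
Qed.

Lemma lim_expectation_comb_le (I : finType) (g : nat -> I -> T -> R) (l c : I -> R) (D C : R) :
  (forall k i, measurable_fun setT (g k i)) -> (forall k i w, `|g k i w| <= D) ->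
  (forall i, ('E_P[g k i] @[k --> \oo] --> (l i)%:E)%E) ->
  (forall k w, \sum_i c i * g k i w <= C) ->
  \sum_i c i * l i <= C.
Proof.
move=> gm gD gl gC.
have cvg_comb : \sum_i c i * fine ('E_P[g k i])%E @[k --> \oo] --> \sum_i c i * l i.
  apply: cvg_big => [|i _]; first exact: add_continuous.
  by apply: cvgMl_tmp; exact: fine_cvg (gl i).
apply: cvgr_to_le cvg_comb _; apply: nearW => k.
by apply: expectation_comb_le => // i; exact: bounded_Lfun1 (gD k i).
Qed.

Lemma lim_expectation_mxnorm_le n (S : Type) (xi : nat -> T -> S) (F : S -> 'M[R]_n)
    (Fbar : 'M[R]_n) (r : R) : 0 <= r ->
  (forall k p q, measurable_fun setT (fun w => F (xi k w) p q)) ->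
  (forall p q, ('E_P[fun w => F (xi k w) p q] @[k --> \oo] --> (Fbar p q)%:E)%E) ->
  (forall s, mxnorm (F s) <= r) ->
  forall y, vnorm (Fbar *m y) <= r * vnorm y.
Proof.
move=> r_ge0 Fm Flim Fr y; set v := Fbar *m y.
apply: vnorm_le_of_vdot; first by rewrite mulr_ge0 ?vnorm_ge0.
rewrite {1}/v vdot_mulmx.
apply: (lim_expectation_comb_le (g := fun k pq w => F (xi k w) pq.1 pq.2) (D := r)).
- by move=> k pq; exact: Fm.
- by move=> k pq w; exact: le_trans (normr_entry_le_mxnorm _ _ _) (Fr _).
- by move=> pq; exact: Flim.
move=> k w; rewrite -vdot_mulmx; apply: le_trans (vdot_le _ _) _.
rewrite ler_wpM2l ?vnorm_ge0 //; apply: le_trans (vnorm_mulmx_le _ _) _.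
by rewrite ler_wpM2r ?vnorm_ge0.
Qed.

Lemma lim_expectation_vnorm_le n (S : Type) (xi : nat -> T -> S) (f : S -> 'cV[R]_n)
    (fbar : 'cV[R]_n) (B : R) : 0 <= B ->
  (forall k p, measurable_fun setT (fun w => f (xi k w) p ord0)) ->
  (forall p, ('E_P[fun w => f (xi k w) p ord0] @[k --> \oo] --> (fbar p ord0)%:E)%E) ->
  (forall s, vnorm (f s) <= B) ->
  vnorm fbar <= B.
Proof.
move=> B_ge0 fm flim fB; apply: vnorm_le_of_vdot => //.
apply: (lim_expectation_comb_le (g := fun k p w => f (xi k w) p ord0) (D := B)) => //.
- by move=> k p w; exact: le_trans (normr_vcoord_le _ _) (fB _).
by move=> k w; apply: le_trans (vdot_le _ _) _; rewrite ler_wpM2l ?vnorm_ge0.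
Qed.

End LimitsOfExpectations.

Section StepSizeWindow.
Variables (R : realType) (alpha : nat -> R) (m : nat).
Hypothesis alpha_ge0 : forall t, 0 <= alpha t.
Local Notation S j := (\sum_(m <= s < m + j) alpha s).

Lemma window_sum_recr j : S j.+1 = S j + alpha (m + j).
Proof. by rewrite addnS big_nat_recr //= leq_addr. Qed.

Lemma window_sum_ge0 j : 0 <= S j.
Proof. by apply: sumr_ge0. Qed.

Lemma window_sum_le i j : (i <= j)%N -> S i <= S j.
Proof.
move=> ij; rewrite [leRHS](@big_cat_nat _ _ _ (m + i)) ?leq_addr ?leq_add2l //=.
by rewrite lerDl sumr_ge0.
Qed.

Lemma window_drift n (x : nat -> 'cV[R]_n) (e : nat -> R) (C : R) j :
  (forall t, vnorm (x t.+1 - x t) <= alpha t * e t) ->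
  (forall i, (i < j)%N -> e (m + i) <= C) ->
  vnorm (x (m + j) - x m) <= S j * C.
Proof.
move=> x_step eC; apply: le_trans (vnorm_telescope _ (leq_addr _ _)) _.
rewrite mulr_suml big_nat [leRHS]big_nat; apply: ler_sum => s /andP [ms sj].
apply: le_trans (x_step s) _; rewrite ler_wpM2l // -(subnKC ms) eC //.
by rewrite -(ltn_add2l m) subnKC.
Qed.

Variable W : nat -> R.
Hypothesis W_ge0 : forall t, 0 <= W t.

Lemma window_growth_le :
  (forall t, W t.+1 <= W t + alpha t * W t / 2) ->
  forall j, S j <= 1 -> W (m + j) <= W m * (1 + S j).
Proof.
move=> W_step; elim=> [_|j IHj]; first by rewrite addn0 big_geq // addr0 mulr1.
rewrite window_sum_recr addnS => Sj1.
have Sj_le1 : S j <= 1 by apply: le_trans Sj1; rewrite lerDl.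
have := ler_wpM2l (alpha_ge0 (m + j)) (IHj Sj_le1).
have : 0 <= W m * alpha (m + j) * (1 - S j) by rewrite !mulr_ge0 ?subr_ge0.
have := W_step (m + j)%N; have := IHj Sj_le1; lra.
Qed.

Lemma window_decay_ge :
  (forall t, W t <= W t.+1 + alpha t * W t / 2) ->
  forall j, S j <= 1 -> W m * (1 - S j / 2) <= W (m + j).
Proof.
move=> W_step; elim=> [_|j IHj]; first by rewrite addn0 big_geq // mul0r subr0 mulr1.
rewrite window_sum_recr addnS => Sj1.
have Sj_le1 : S j <= 1 by apply: le_trans Sj1; rewrite lerDl.
have alpha_le2 : 0 <= 1 - alpha (m + j) / 2.
  by have := window_sum_ge0 j; rewrite subr_ge0; lra.
have := ler_wpM2l alpha_le2 (IHj Sj_le1).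
have : 0 <= W m * alpha (m + j) * S j by rewrite !mulr_ge0 ?window_sum_ge0.
have := W_step (m + j)%N; lra.
Qed.

End StepSizeWindow.

Section TwoTimeScalePath.
Variables (R : realType) (n : nat) (S : Type).
Variables (A11 A12 A21 A22 : S -> 'M[R]_n) (b1 b2 : S -> 'cV[R]_n) (B : R).
Hypothesis A_le : forall s, [/\ mxnorm (A11 s) <= 1/4, mxnorm (A12 s) <= 1/4,
                                mxnorm (A21 s) <= 1/4 & mxnorm (A22 s) <= 1/4].
Hypothesis b_le : forall s, vnorm (b1 s) <= B /\ vnorm (b2 s) <= B.
Variables (xi : nat -> S) (alpha beta : nat -> R) (x y : nat -> 'cV[R]_n).
Hypotheses (alpha_ge0 : forall t, 0 <= alpha t) (beta_ge0 : forall t, 0 <= beta t).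
Hypothesis beta_le_alpha : forall t, beta t <= alpha t.
Hypothesis x_rec : forall t,
  x t.+1 = x t - alpha t *: (A11 (xi t) *m x t + A12 (xi t) *m y t - b1 (xi t)).
Hypothesis y_rec : forall t,
  y t.+1 = y t - beta t *: (A21 (xi t) *m x t + A22 (xi t) *m y t - b2 (xi t)).

Let W t := vnorm (x t) + vnorm (y t) + 4 * B.

Let W_ge0 t : 0 <= W t.
Proof.
have B_ge0 : 0 <= B := le_trans (vnorm_ge0 _) (b_le (xi 0)).1.
by rewrite !addr_ge0 ?vnorm_ge0 ?mulr_ge0.
Qed.

Let drive_le (M1 M2 : 'M[R]_n) b t :
  mxnorm M1 <= 1/4 -> mxnorm M2 <= 1/4 -> vnorm b <= B ->
  vnorm (M1 *m x t + M2 *m y t - b) <= W t / 4.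
Proof.
move=> M1_le M2_le b_leB; apply: le_trans (vnorm_affine_le _ _ _ _ _) _.
have := ler_wpM2r (vnorm_ge0 (x t)) M1_le; have := ler_wpM2r (vnorm_ge0 (y t)) M2_le.
rewrite /W; lra.
Qed.

Lemma x_step_le t : vnorm (x t.+1 - x t) <= alpha t * (W t / 4).
Proof.
rewrite x_rec addrAC subrr add0r vnormN vnormZ ger0_norm // ler_wpM2l //.
have [A11_le A12_le _ _] := A_le (xi t); have [b1_le _] := b_le (xi t).
exact: drive_le.
Qed.

Lemma y_step_le t : vnorm (y t.+1 - y t) <= alpha t * (W t / 4).
Proof.
rewrite y_rec addrAC subrr add0r vnormN vnormZ ger0_norm //.
apply: le_trans (ler_wpM2r (divr_ge0 (W_ge0 t) _) (beta_le_alpha t)) => //.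
rewrite ler_wpM2l //.
have [_ _ A21_le A22_le] := A_le (xi t); have [_ b2_le] := b_le (xi t).
exact: drive_le.
Qed.

Lemma path_size_step_le t : W t.+1 <= W t + alpha t * W t / 2.
Proof.
have := vnormB_dist (x t.+1) (x t); have := vnormB_dist (y t.+1) (y t).
have := x_step_le t; have := y_step_le t; rewrite /W; lra.
Qed.

Lemma path_size_step_ge t : W t <= W t.+1 + alpha t * W t / 2.
Proof.
have := vnormB_dist (x t) (x t.+1); have := vnormB_dist (y t) (y t.+1).
rewrite ![vnorm (_ t - _ t.+1)]vnormBC.
have := x_step_le t; have := y_step_le t; rewrite /W; lra.
Qed.

Lemma path_window_bound m j : \sum_(m <= s < m + j) alpha s <= 1 -> [/\
  vnorm (x (m + j) - x m) <= (\sum_(m <= s < m + j) alpha s) * (W m / 2),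
  vnorm (y (m + j) - y m) <= (\sum_(m <= s < m + j) alpha s) * (W m / 2) &
  W m <= 2 * W (m + j)].
Proof.
move=> Sj_le1.
have W_quarter_le i : (i < j)%N -> W (m + i) / 4 <= W m / 2.
  move=> ij; have Si_le1 := le_trans (window_sum_le m alpha_ge0 (ltnW ij)) Sj_le1.
  have := window_growth_le alpha_ge0 W_ge0 path_size_step_le Si_le1.
  have := window_sum_ge0 m alpha_ge0 i; have := W_ge0 m; nra.
split.
- exact: (window_drift (e := fun t => W t / 4) alpha_ge0 x_step_le W_quarter_le).
- exact: (window_drift (e := fun t => W t / 4) alpha_ge0 y_step_le W_quarter_le).
have := window_decay_ge alpha_ge0 W_ge0 path_size_step_ge Sj_le1.
have := window_sum_ge0 m alpha_ge0 j; have := W_ge0 m; nra.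
Qed.

End TwoTimeScalePath.

Section AveragedCoordinates.
Variables (R : realType) (n : nat) (Ab11 Ab12 : 'M[R]_n) (bb1 Ys : 'cV[R]_n) (B : R).
Hypotheses (Ab11_unit : Ab11 \in unitmx) (smin_gt0 : 0 < smin Ab11) (smin_le1 : smin Ab11 <= 1).
Hypothesis Ab12_le : forall y, vnorm (Ab12 *m y) <= 1/4 * vnorm y.
Hypothesis bb1_le : vnorm bb1 <= B.

Let u := (smin Ab11)^-1.
Let zhat x y := col_mx (x - invmx Ab11 *m (bb1 - Ab12 *m y)) (y - Ys).

Lemma vnorm_le_zhat x y :
  vnorm x + vnorm y + 4 * B <= (8 + u) / 2 * (vnorm (zhat x y) + u * (2 * B + vnorm Ys)).
Proof.
rewrite /zhat; set p := invmx Ab11 *m _; set z := vnorm (col_mx _ _).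
have u_ge1 : 1 <= u by rewrite /u invf_ge1.
have u_gt0 : 0 < u := lt_le_trans ltr01 u_ge1.
have B_ge0 : 0 <= B := le_trans (vnorm_ge0 _) bb1_le.
have p_le : vnorm p <= u * (B + vnorm y / 4).
  apply: le_trans (vnorm_invmx_le _ Ab11_unit smin_gt0) _.
  rewrite -/u ler_wpM2l ?(ltW u_gt0) //; apply: le_trans (vnormB _ _) _.
  by rewrite lerD // (le_trans (Ab12_le y)) // mul1r mulrC.
have x_le : vnorm x <= z + u * (B + vnorm y / 4).
  by have := vnormB_dist x p; have := vnorm_colu_le (x - p) (y - Ys); rewrite -/z; lra.
have y_le : vnorm y <= z + vnorm Ys.
  by have := vnormB_dist y Ys; have := vnorm_cold_le (x - p) (y - Ys); rewrite -/z; lra.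
have W_le : vnorm x + vnorm y + 4 * B <= (2 + u / 4) * z + (4 + u) * B + (1 + u / 4) * vnorm Ys.
  by have := ler_wpM2l (ltW u_gt0) y_le; lra.
apply: le_trans W_le _.
have : 0 <= (2 + u / 4) * z by rewrite mulr_ge0 ?vnorm_ge0 ?addr_ge0 ?divr_ge0 ?ltW.
have : 0 <= (u - 1) * (u + 8) * B by rewrite !mulr_ge0 ?subr_ge0; lra.
have : 0 <= (u - 1) * (u + 8) * vnorm Ys by rewrite !mulr_ge0 ?subr_ge0 ?vnorm_ge0; lra.
have := mulr_ge0 (ltW u_gt0) (vnorm_ge0 Ys); have := mulr_ge0 (ltW u_gt0) B_ge0; nra.
Qed.

Lemma vnorm_zhatB x y x' y' :
  vnorm (zhat x' y' - zhat x y) <= vnorm (x' - x) + (1 + u / 4) * vnorm (y' - y).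
Proof.
have u_ge0 : 0 <= u by rewrite /u invr_ge0 ltW.
rewrite /zhat opp_col_mx add_col_mx; apply: le_trans (vnorm_col_le _ _) _.
set p := invmx Ab11 *m (bb1 - Ab12 *m y); set p' := invmx Ab11 *m (bb1 - Ab12 *m y').
have -> : y' - Ys - (y - Ys) = y' - y by rewrite opprB addrA subrK.
have -> : x' - p' - (x - p) = (x' - x) + (p - p').
  by rewrite opprD opprK addrACA [- p' + p]addrC.
have p_le : vnorm (p - p') <= u * (1/4 * vnorm (y' - y)).
  rewrite -mulmxBr opprB addrC addrA subrK -mulmxBr.
  apply: le_trans (vnorm_invmx_le _ Ab11_unit smin_gt0) _.
  by rewrite -/u ler_wpM2l.
by have := vnormD (x' - x) (p - p'); lra.
Qed.

Lemma vnorm_zhatB_le x y x' y' a W : 0 <= a * W ->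
  vnorm (x' - x) <= a * (W / 2) -> vnorm (y' - y) <= a * (W / 2) ->
  vnorm (zhat x' y' - zhat x y) <= a * (8 + u) / 8 * W.
Proof.
move=> aW_ge0 x_le y_le; have u_ge0 : 0 <= u by rewrite /u invr_ge0 ltW.
apply: le_trans (vnorm_zhatB x y x' y') _.
have coef_ge0 : 0 <= 1 + u / 4 by rewrite addr_ge0 ?divr_ge0.
by have := ler_wpM2l coef_ge0 y_le; have := mulr_ge0 u_ge0 aW_ge0; lra.
Qed.

End AveragedCoordinates.

Section IncrementArithmetic.
Variable R : realType.

Lemma sqr_le_sum2 (d p q : R) : 0 <= d -> d <= p + q -> d ^+ 2 <= 2 * p ^+ 2 + 2 * q ^+ 2.
Proof.
move=> d_ge0 d_le; apply: le_trans (_ : (p + q) ^+ 2 <= _).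
  by rewrite ler_sqr // nnegrE (le_trans d_ge0).
by have := sqr_ge0 (p - q); rewrite sqrrB sqrrD; lra.
Qed.

Lemma increment_bounds (L c a d zm zk K Wm Wk : R) :
  0 < L -> c = (8 * L + 1) ^+ 2 -> 0 <= a -> 0 <= d -> 0 <= Wm ->
  d <= a * (8 + L^-1) / 8 * Wm -> Wm <= 2 * Wk ->
  Wm <= (8 + L^-1) / 2 * (zm + L^-1 * K) -> Wk <= (8 + L^-1) / 2 * (zk + L^-1 * K) ->
  [/\ d <= c / (8 * L ^+ 2) * a * zm + c * K / (8 * L ^+ 3) * a,
      d <= 3 * c / (8 * L ^+ 2) * a * zk + 3 * c * K / (8 * L ^+ 3) * a &
      d ^+ 2 <= 9 * c ^+ 2 / (32 * L ^+ 4) * a ^+ 2 * zk ^+ 2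
                + 9 * c ^+ 2 * K ^+ 2 / (32 * L ^+ 6) * a ^+ 2].
Proof.
move=> L_gt0 -> a_ge0 d_ge0 Wm_ge0 d_le Wm_le Wm_zm Wk_zk.
have L_neq0 : L != 0 by rewrite gt_eqF.
set u := L^-1 in d_le Wm_zm Wk_zk *; have u_ge0 : 0 <= u by rewrite invr_ge0 ltW.
set F := a * (8 + u) / 8 in d_le *; have F_ge0 : 0 <= F by rewrite !mulr_ge0 ?addr_ge0.
have FWm_ge0 : 0 <= F * Wm by rewrite mulr_ge0.
have m_le := ler_wpM2l F_ge0 Wm_zm.
have k_le := ler_wpM2l F_ge0 (le_trans Wm_le (ler_wpM2l (ler0n _ 2) Wk_zk)).
have m_coefE : (8 * L + 1) ^+ 2 / (8 * L ^+ 2) * a * zm + (8 * L + 1) ^+ 2 * K / (8 * L ^+ 3) * a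
               = 2 * (F * ((8 + u) / 2 * (zm + u * K))) by rewrite /F /u; field.
have k_coefE : 3 * (8 * L + 1) ^+ 2 / (8 * L ^+ 2) * a * zk
                 + 3 * (8 * L + 1) ^+ 2 * K / (8 * L ^+ 3) * a
               = 3 * (F * (2 * ((8 + u) / 2 * (zk + u * K)))) by rewrite /F /u; field.
have d_le_k : d <= 3 * (8 * L + 1) ^+ 2 / (8 * L ^+ 2) * a * zk
                   + 3 * (8 * L + 1) ^+ 2 * K / (8 * L ^+ 3) * a by rewrite k_coefE; lra.
split=> //; first by rewrite m_coefE; lra.
apply: le_trans (sqr_le_sum2 d_ge0 d_le_k) _.
by rewrite le_eqVlt; apply/orP; left; apply/eqP; field.
Qed.

End IncrementArithmetic.

Lemma ln2_le1 (R : realType) : ln (2 : R) <= 1.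
Proof.
have two_le_e : (2 : R) <= expR 1 by have := @expR_ge1Dx R 1; rewrite addrC.
by rewrite -[leRHS](expRK 1) ler_ln ?posrE ?expR_gt0.
Qed.

Unset Implicit Arguments.

Theorem lemma10
  (R : realType) (n : nat) (hn : (1 <= n)%N)
  (* probability space and the (Markov) process xi_k with state space S *)
  (dO : measure_display) (Omega : measurableType dO) (P : probability Omega R)
  (S : Type) (xi : nat -> Omega -> S)
  (A11 A12 A21 A22 : S -> 'M[R]_n) (b1 b2 : S -> 'cV[R]_n)
  (Ab11 Ab12 Ab21 Ab22 : 'M[R]_n) (bb1 bb2 : 'cV[R]_n)
  (* measurability of the entries of A_ij(xi_k), b_i(xi_k) *)
  (hmA : forall k (p q : 'I_n),
     [/\ measurable_fun setT (fun w => A11 (xi k w) p q),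
         measurable_fun setT (fun w => A12 (xi k w) p q),
         measurable_fun setT (fun w => A21 (xi k w) p q) &
         measurable_fun setT (fun w => A22 (xi k w) p q)])
  (hmb : forall k (p : 'I_n),
     measurable_fun setT (fun w => b1 (xi k w) p ord0) /\
     measurable_fun setT (fun w => b2 (xi k w) p ord0))
  (* Abar_ij = lim_k E[A_ij(xi_k)], bbar_i = lim_k E[b_i(xi_k)] (entrywise) *)
  (hAb : forall p q : 'I_n,
     [/\ ((fun k => 'E_P[fun w => A11 (xi k w) p q]) @ \oo --> (Ab11 p q)%:E)%E,
         ((fun k => 'E_P[fun w => A12 (xi k w) p q]) @ \oo --> (Ab12 p q)%:E)%E,
         ((fun k => 'E_P[fun w => A21 (xi k w) p q]) @ \oo --> (Ab21 p q)%:E)%E &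
         ((fun k => 'E_P[fun w => A22 (xi k w) p q]) @ \oo --> (Ab22 p q)%:E)%E])
  (hbb : forall p : 'I_n,
     ((fun k => 'E_P[fun w => b1 (xi k w) p ord0]) @ \oo --> (bb1 p ord0)%:E)%E /\
     ((fun k => 'E_P[fun w => b2 (xi k w) p ord0]) @ \oo --> (bb2 p ord0)%:E)%E)
  (* positive definiteness of Abar11 and of the Schur complement Delta *)
  (hA11pd : posdef Ab11)
  (hDpd : posdef (Ab22 - Ab21 *m invmx Ab11 *m Ab12))
  (* (A2) *)
  (B : R) (hB : 0 < B)
  (hA2b : forall s, vnorm (b1 s) <= B /\ vnorm (b2 s) <= B)
  (hA2A : forall s, [/\ mxnorm (A11 s) <= 1/4, mxnorm (A12 s) <= 1/4,
                        mxnorm (A21 s) <= 1/4 & mxnorm (A22 s) <= 1/4])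
  (* the solution Xs, Ys of the averaged linear system *)
  (Xs Ys : 'cV[R]_n)
  (hsol1 : Ab11 *m Xs + Ab12 *m Ys = bb1)
  (hsol2 : Ab21 *m Xs + Ab22 *m Ys = bb2)
  (* step sizes: nonnegative, nonincreasing, beta_k <= alpha_k *)
  (alpha beta : nat -> R)
  (ha0 : forall k, 0 <= alpha k) (hb0 : forall k, 0 <= beta k)
  (hanin : forall k, alpha k.+1 <= alpha k)
  (hbnin : forall k, beta k.+1 <= beta k)
  (hba : forall k, beta k <= alpha k)
  (* mixing time function and K* *)
  (tau : R -> nat) (Kstar : nat) (hK0 : (0 < Kstar)%N)
  (hK : forall k, (Kstar <= k)%N ->
     [/\ (tau (alpha k) <= k)%N,
         \sum_(k - tau (alpha k) <= t < k.+1) alpha t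
           <= (tau (alpha k))%:R * alpha (k - tau (alpha k))%N &
         (tau (alpha k))%:R * alpha (k - tau (alpha k))%N <= ln 2])
  (* the iterates *)
  (X Y : nat -> Omega -> 'cV[R]_n)
  (hX : forall k w, X k.+1 w = X k w - alpha k *:
        (A11 (xi k w) *m X k w + A12 (xi k w) *m Y k w - b1 (xi k w)))
  (hY : forall k w, Y k.+1 w = Y k w - beta k *:
        (A21 (xi k w) *m X k w + A22 (xi k w) *m Y k w - b2 (xi k w))) :
  let lam1 := smin Ab11 in
  let Zh := fun k w => col_mx (X k w - invmx Ab11 *m (bb1 - Ab12 *m Y k w))
                              (Y k w - Ys) in
  let c := (8 * lam1 + 1) ^+ 2 in
  let K := 2 * B + vnorm Ys in
  forall k w, (Kstar <= k)%N ->
  let t := tau (alpha k) in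
  let a := alpha_win alpha k t in
  let d := vnorm (Zh k w - Zh (k - t)%N w) in
  [/\ d <= c / (8 * lam1 ^+ 2) * a * vnorm (Zh (k - t)%N w)
           + c * K / (8 * lam1 ^+ 3) * a,
      d <= 3 * c / (8 * lam1 ^+ 2) * a * vnorm (Zh k w)
           + 3 * c * K / (8 * lam1 ^+ 3) * a &
      d ^+ 2 <= 9 * c ^+ 2 / (32 * lam1 ^+ 4) * a ^+ 2 * vnorm (Zh k w) ^+ 2
           + 9 * c ^+ 2 * K ^+ 2 / (32 * lam1 ^+ 6) * a ^+ 2].
Proof.
move=> lam1 Zh c K k w hk t a d.
pose i0 : 'I_n := Ordinal hn.
have Ab11_unit := posdef_unitmx hA11pd.
have Ab11_le : forall y, vnorm (Ab11 *m y) <= 1/4 * vnorm y.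
  apply: (lim_expectation_mxnorm_le (P := P) (xi := xi) (F := A11)) => [|k' p q|p q|s];
    [lra | by case: (hmA k' p q) | by case: (hAb p q) | by case: (hA2A s)].
have Ab12_le : forall y, vnorm (Ab12 *m y) <= 1/4 * vnorm y.
  apply: (lim_expectation_mxnorm_le (P := P) (xi := xi) (F := A12)) => [|k' p q|p q|s];
    [lra | by case: (hmA k' p q) | by case: (hAb p q) | by case: (hA2A s)].
have bb1_le : vnorm bb1 <= B.
  apply: (lim_expectation_vnorm_le (P := P) (xi := xi) (f := b1)) => [|k' p|p|s];
    [exact: ltW | by case: (hmb k' p) | by case: (hbb p) | by case: (hA2b s)].
have lam1_gt0 : 0 < lam1 := smin_gt0 i0 Ab11_unit.
have lam1_le1 : lam1 <= 1 by apply: le_trans (smin_le i0 Ab11_le) _; lra.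
have [t_le_k sum_le ln2_ge] := hK k hk.
have a_le1 : a <= 1.
  apply: le_trans (le_trans sum_le (le_trans ln2_ge (ln2_le1 R))).
  by rewrite big_nat_recr ?leq_subr //= lerDl.
have := path_window_bound hA2A hA2b ha0 hb0 hba (x := fun j => X j w) (y := fun j => Y j w)
  (fun j => hX j w) (fun j => hY j w) (m := k - t) (j := t).
rewrite subnK // => /(_ a_le1) [dX dY Wmk].
pose W j := vnorm (X j w) + vnorm (Y j w) + 4 * B.
have a_ge0 : 0 <= a by apply: sumr_ge0 => s _.
have W_ge0 : 0 <= W (k - t)%N by rewrite /W !addr_ge0 ?vnorm_ge0 ?mulr_ge0 ?ltW.
apply: (increment_bounds (Wm := W (k - t)%N) (Wk := W k) lam1_gt0 erefl a_ge0 (vnorm_ge0 _)).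
- by [].
- exact: vnorm_zhatB_le Ab11_unit lam1_gt0 Ab12_le _ _ _ _ _ _ (mulr_ge0 a_ge0 W_ge0) dX dY.
- exact: Wmk.
- exact: vnorm_le_zhat Ab11_unit lam1_gt0 lam1_le1 Ab12_le bb1_le _ _.
- exact: vnorm_le_zhat Ab11_unit lam1_gt0 lam1_le1 Ab12_le bb1_le _ _.
Qed.
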